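(* Let $d\geq2$ and let $f$, $S$, $T(r)$, $H(\underline{s})$, $\underline{S}$ be as in the context. Let $\underline{s}=(s_k)_{k\geq0}\in\underline{S}$ and $x,y\in H(\underline{s})$, and for $k\geq 0$ write $x^k=(x^k_1,\dots,x^k_d)=f^k(x)$ and $y^k=(y^k_1,\dots,y^k_d)=f^k(y)$. Then there exists $M>0$ with the following property: if $|y^k_d|>|x^k_d|+M$ for some $k\geq 0$, then $$|y^{k+1}_d|>\frac{\lambda}{3}\exp|y^k_d|+M\geq 5|x^{k+1}_d|+M.$$
   Context: Notation: for $x=(x_1,\dots,x_d)\in\mathbb R^d$, $\|x\|$ is the Euclidean norm, $H^+=\{x:x_d\geq 0\}$. Construction of $F$: let $F_0$ be a bi-Lipschitz homeomorphism from the half-cube $[-1,1]^{d-1}\times[0,1]$ onto the upper half-ball $\{x:\|x\|\leq 1,\ x_d\geq 0\}$ which maps the face $[-1,1]^{d-1}\times\{1\}$ onto the hemisphere $\{x:\|x\|=1,\ x_d\geq 0\}$ (hence the rest of the boundary of the half-cube onto the flat disk $\{x:\|x\|\leq1,x_d=0\}$). Put $F=F_0$ on the half-cube and $F(x)=\exp(x_d-1)F_0(x_1,\dots,x_{d-1},1)$ for $x\in[-1,1]^{d-1}\times(1,\infty)$; then $F$ maps $[-1,1]^{d-1}\times[0,\infty)$ bijectively onto $H^+$. Extend $F$ to $F:\mathbb R^d\to\mathbb R^d$ by repeated reflections: if $\rho$ is the reflection in one of the hyperplanes $\{x_j=m\}$ ($1\leq j\leq d-1$, $m$ an odd integer) or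 $\{x_d=0\}$ bounding a cell on which $F$ is already defined, set $F(\rho(x))=\tau(F(x))$, where $\tau(y_1,\dots,y_d)=(y_1,\dots,y_{d-1},-y_d)$. $F$ is locally bi-Lipschitz; let $\ell(DF(x))=\inf_{\|y\|=1}\|DF(x)(y)\|$ and $\beta=\operatorname{ess\,inf}_{x}\ell(DF(x))>0$. Fix $\lambda>1/\beta$ and put $f=\lambda F$. Let $S=\mathbb Z^{d-1}\times\{-1,1\}$ and for $r\in S$ let $T(r)=\{x:|x_j-2r_j|\leq 1 \ (1\leq j\leq d-1),\ r_dx_d\geq 0\}$. For a sequence $\underline{s}=(s_k)_{k\geq0}$ in $S$ let $H(\underline{s})=\{x: f^k(x)\in T(s_k)\ \forall k\geq 0\}$ ($f^k$ the $k$-th iterate), and let $\underline{S}$ be the set of sequences in $S$ with $H(\underline{s})\neq\emptyset$. *)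

From Stdlib Require Import Reals ZArith.
From Coquelicot Require Import Rbar Lub.
From mathcomp Require Import ssreflect ssrfun ssrbool eqtype ssrnat seq choice fintype.

Set Implicit Arguments.
Unset Strict Implicit.
Open Scope R_scope.

(* A point of R^d, d = n+1, is written as (x_1..x_{d-1}, x_d) = (x.1, x.2). *)
Definition pt (n : nat) : Type := (('I_n -> R) * R)%type.

Definition sumI (n : nat) (g : 'I_n -> R) : R := foldr Rplus 0 (map g (enum 'I_n)).
Definition prodI (n : nat) (g : 'I_n -> R) : R := foldr Rmult 1 (map g (enum 'I_n)).
Definition sumIZ (n : nat) (g : 'I_n -> Z) : Z := foldr Z.add 0%Z (map g (enum 'I_n)).

Definition pnorm {n} (x : pt n) : R := sqrt (sumI (fun i => (x.1 i) ^ 2) + x.2 ^ 2).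
Definition padd {n} (x y : pt n) : pt n := (fun i => x.1 i + y.1 i, x.2 + y.2).
Definition pscale {n} (c : R) (x : pt n) : pt n := (fun i => c * x.1 i, c * x.2).
Definition psub {n} (x y : pt n) : pt n := (fun i => x.1 i - y.1 i, x.2 - y.2).

Definition tau {n} (x : pt n) : pt n := (x.1, - x.2).

Definition half_cube {n} (x : pt n) : Prop := (forall i, -1 <= x.1 i <= 1) /\ 0 <= x.2 <= 1.
Definition top_face {n} (x : pt n) : Prop := (forall i, -1 <= x.1 i <= 1) /\ x.2 = 1.
Definition half_ball {n} (x : pt n) : Prop := pnorm x <= 1 /\ 0 <= x.2.
Definition hemisphere {n} (x : pt n) : Prop := pnorm x = 1 /\ 0 <= x.2.

(* F0 : bi-Lipschitz homeomorphism half-cube -> upper half-ball, mapping the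
   top face onto the hemisphere (only its values on the half-cube matter). *)
Definition admissible_F0 {n} (F0 : pt n -> pt n) : Prop :=
  (forall x, half_cube x -> half_ball (F0 x)) /\
  (forall y, half_ball y -> exists x, half_cube x /\ F0 x = y) /\
  (forall x y, half_cube x -> half_cube y -> F0 x = F0 y -> x = y) /\
  (exists L, 0 < L /\ forall x y, half_cube x -> half_cube y ->
      pnorm (psub (F0 x) (F0 y)) <= L * pnorm (psub x y) /\
      pnorm (psub x y) <= L * pnorm (psub (F0 x) (F0 y))) /\
  (forall x, top_face x -> hemisphere (F0 x)) /\
  (forall y, hemisphere y -> exists x, top_face x /\ F0 x = y).

(* F on the strip [-1,1]^{d-1} x [0,oo) *)
Definition F_strip {n} (F0 : pt n -> pt n) (x : pt n) : pt n :=
  if Rle_dec x.2 1 then F0 x else pscale (exp (x.2 - 1)) (F0 (x.1, 1)).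

(* Extension by repeated reflections in the hyperplanes x_j = m (m odd) and
   x_d = 0.  A coordinate a in [2m-1, 2m+1] is brought back to [-1,1] by |m|
   reflections, to (-1)^m (a - 2m); each reflection contributes a tau. *)
Definition refl_count (a : R) : Z := Int_part ((a + 1) / 2).
Definition fold_coord (a : R) : R :=
  (if Z.even (refl_count a) then 1 else -1) * (a - 2 * IZR (refl_count a)).

Definition F_full {n} (F0 : pt n -> pt n) (x : pt n) : pt n :=
  let v := F_strip F0 (fun i => fold_coord (x.1 i), Rabs x.2) in
  let odd_refl := xorb (Z.odd (sumIZ (fun i => refl_count (x.1 i))))
                       (if Rlt_dec x.2 0 then true else false) in
  if odd_refl then tau v else v.

Definition f_map {n} (F0 : pt n -> pt n) (lam : R) (x : pt n) : pt n :=
  pscale lam (F_full F0 x).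

Definition is_linear_map {n} (L : pt n -> pt n) : Prop :=
  forall a b c, L (padd a b) = padd (L a) (L b) /\ L (pscale c a) = pscale c (L a).

Definition is_fderiv {n} (G : pt n -> pt n) (x : pt n) (L : pt n -> pt n) : Prop :=
  is_linear_map L /\
  forall eps, 0 < eps -> exists delta, 0 < delta /\ forall h, pnorm h < delta ->
    pnorm (psub (psub (G (padd x h)) (G x)) (L h)) <= eps * pnorm h.

Definition ell {n} (L : pt n -> pt n) : Rbar :=
  Glb_Rbar (fun r => exists y : pt n, pnorm y = 1 /\ r = pnorm (L y)).

Definition in_box {n} (a b : pt n) (x : pt n) : Prop :=
  (forall i, a.1 i <= x.1 i <= b.1 i) /\ a.2 <= x.2 <= b.2.
Definition box_vol {n} (a b : pt n) : R := prodI (fun i => b.1 i - a.1 i) * (b.2 - a.2).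
Definition null_set {n} (N : pt n -> Prop) : Prop :=
  forall eps, 0 < eps -> exists a b : nat -> pt n,
    (forall k, (forall i, (a k).1 i <= (b k).1 i) /\ (a k).2 <= (b k).2) /\
    (forall x, N x -> exists k, in_box (a k) (b k) x) /\
    (forall K, sum_f_R0 (fun k => box_vol (a k) (b k)) K <= eps).

Definition ess_inf_ell {n} (G : pt n -> pt n) : Rbar :=
  Lub_Rbar (fun c => null_set (fun x =>
    ~ (exists L, is_fderiv G x L /\ Rbar_le (Coquelicot.Rbar.Finite c) (ell L)))).

Definition Zpt (n : nat) : Type := (('I_n -> Z) * Z)%type.
Definition in_S {n} (r : Zpt n) : Prop := r.2 = 1%Z \/ r.2 = (-1)%Z.
Definition T_cell {n} (r : Zpt n) (x : pt n) : Prop :=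
  (forall j, Rabs (x.1 j - 2 * IZR (r.1 j)) <= 1) /\ 0 <= IZR r.2 * x.2.
Definition H_set {n} (f : pt n -> pt n) (s : nat -> Zpt n) (x : pt n) : Prop :=
  forall k, T_cell (s k) (Nat.iter k f x).
Definition S_bar {n} (f : pt n -> pt n) (s : nat -> Zpt n) : Prop :=
  (forall k, in_S (s k)) /\ exists x, H_set f s x.

(* Once |y^k_d| exceeds |x^k_d| + M, the point y^k lies far above the unit
   half-cube, where F is exp(x_d - 1) times a unit vector w of the upper
   hemisphere, while every coordinate of f(x^k) is at most lambda exp|x^k_d|.
   As f(x^k) and f(y^k) lie in the same cell T(s_{k+1}), their horizontal
   coordinates differ by at most 2; since exp(|y^k_d| - 1) dwarfs exp|x^k_d|,
   the horizontal part of w is tiny, so w_d is close to 1 and y^{k+1}_d is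
   almost lambda exp(|y^k_d| - 1) > (lambda / 3) exp|y^k_d| + M, whereas
   5 |x^{k+1}_d| <= 5 lambda exp|x^k_d| is negligible. *)
From Stdlib Require Import Reals Lra.
From Coquelicot Require Import Rbar Lub.
From mathcomp Require Import ssreflect ssrfun ssrbool eqtype ssrnat seq choice fintype.
Open Scope R_scope.

Lemma exp_nat_mul k x : exp (INR k * x) = exp x ^ k.
Proof.
elim: k => [|k IH]; first by rewrite Rmult_0_l exp_0.
by rewrite S_INR Rmult_plus_distr_r Rmult_1_l exp_plus IH /= Rmult_comm.
Qed.

Lemma exp_1_le : exp 1 <= 282 / 100.
Proof.
have exp_lower : 15 / 16 <= exp (- / 16) by have := exp_ineq1_le (- / 16); lra.
have exp_upper : exp (/ 16) <= 16 / 15.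
  rewrite -(Rinv_inv (exp _)) -exp_Ropp -(Rinv_div 15 16).
  apply: Rinv_le_contravar; lra.
have -> : 1 = INR 16 * / 16 by rewrite /=; field.
rewrite exp_nat_mul; apply: (Rle_trans _ ((16 / 15) ^ 16)); last by simpl; lra.
by apply: pow_incr; split; [apply: Rlt_le; apply: exp_pos|].
Qed.

Lemma exp_pred_ge_sqr t : 0 <= t -> t ^ 2 / 4 <= exp (t - 1).
Proof.
move=> t_ge0.
have -> : exp (t - 1) = exp ((t - 1) / 2) ^ 2.
  by rewrite /= Rmult_1_r -exp_plus; f_equal; field.
have := exp_ineq1_le ((t - 1) / 2); nra.
Qed.

Lemma abs_le_of_close {u v c : R} : Rabs (u - c) <= 1 -> Rabs (v - c) <= 1 -> Rabs u <= Rabs v + 2.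
Proof. by move=> *; split_Rabs; lra. Qed.

Section FiniteSums.
Variables (T : Type) (g : T -> R).

Lemma sum_map_ge0 (l : seq T) : (forall i, 0 <= g i) -> 0 <= foldr Rplus 0 (map g l).
Proof. by move=> g_ge0; elim: l => [|h l IH] /=; [lra | have := g_ge0 h; lra]. Qed.

Lemma sum_map_le_const (l : seq T) c :
  (forall i, g i <= c) -> foldr Rplus 0 (map g l) <= INR (size l) * c.
Proof.
move=> g_le; elim: l => [|h l IH] /=; first lra.
by rewrite -/(INR (S (size l))) S_INR; have := g_le h; lra.
Qed.

End FiniteSums.

Lemma sum_map_ge_term (T : eqType) (g : T -> R) (l : seq T) x :
  (forall i, 0 <= g i) -> x \in l -> g x <= foldr Rplus 0 (map g l).
Proof.
move=> g_ge0; elim: l => [|h l IH] //=; rewrite in_cons => /orP [/eqP ->|x_l].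
- by have := @sum_map_ge0 _ g l g_ge0; lra.
- by have := IH x_l; have := g_ge0 h; lra.
Qed.

Lemma sumI_ge0 {n} {g : 'I_n -> R} : (forall i, 0 <= g i) -> 0 <= sumI g.
Proof. exact: sum_map_ge0. Qed.

Lemma sumI_ge_term {n} {g : 'I_n -> R} i : (forall i, 0 <= g i) -> g i <= sumI g.
Proof. by move=> g_ge0; apply: sum_map_ge_term => //; exact: mem_enum. Qed.

Lemma sumI_le_const {n} {g : 'I_n -> R} c : (forall i, g i <= c) -> sumI g <= INR n * c.
Proof. by move=> g_le; have := @sum_map_le_const _ g (enum 'I_n) c g_le; rewrite size_enum_ord. Qed.

Lemma pnorm_sqr {n} (x : pt n) : pnorm x ^ 2 = sumI (fun i => x.1 i ^ 2) + x.2 ^ 2.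
Proof.
rewrite /pnorm -Rsqr_pow2 Rsqr_sqrt //.
have := sumI_ge0 (fun i => pow2_ge_0 (x.1 i)); have := pow2_ge_0 x.2; lra.
Qed.

Lemma abs_le_pnorm {n} (x : pt n) u : u ^ 2 <= pnorm x ^ 2 -> Rabs u <= pnorm x.
Proof.
move=> le_sqr; rewrite -(Rabs_pos_eq (pnorm x)); last exact: sqrt_pos.
by apply: Rsqr_le_abs_0; rewrite /Rsqr; move: le_sqr => /=; rewrite !Rmult_1_r.
Qed.

Lemma abs_horizontal_le_pnorm {n} (x : pt n) i : Rabs (x.1 i) <= pnorm x.
Proof.
apply: abs_le_pnorm; rewrite pnorm_sqr.
have := sumI_ge_term i (fun j => pow2_ge_0 (x.1 j)); have := pow2_ge_0 x.2; lra.
Qed.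

Lemma abs_vertical_le_pnorm {n} (x : pt n) : Rabs x.2 <= pnorm x.
Proof.
apply: abs_le_pnorm; rewrite pnorm_sqr.
have := sumI_ge0 (fun j => pow2_ge_0 (x.1 j)); lra.
Qed.

Lemma unit_vertical_sqr_ge {n} {w : pt n} {c : R} :
  pnorm w = 1 -> (forall j, Rabs (w.1 j) <= c) -> 1 - INR n * c ^ 2 <= w.2 ^ 2.
Proof.
move=> w_unit w_small.
have : sumI (fun j => w.1 j ^ 2) <= INR n * c ^ 2.
  apply: sumI_le_const => j; rewrite -pow2_abs; apply: pow_incr.
  by split; [exact: Rabs_pos | exact: w_small].
by have := pnorm_sqr w; rewrite w_unit; lra.
Qed.

Lemma fold_coord_bound a : -1 <= fold_coord a <= 1.
Proof.
rewrite /fold_coord; have [lb ub] := base_Int_part ((a + 1) / 2).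
by case: (Z.even _); rewrite /refl_count; lra.
Qed.

Section Unfolding.
Context {n : nat} {F0 : pt n -> pt n} (F0_adm : admissible_F0 F0).

Let folded (a : pt n) : pt n := (fun i => fold_coord (a.1 i), Rabs a.2).

Lemma F_full_abs a :
  (F_full F0 a).1 = (F_strip F0 (folded a)).1 /\
  Rabs (F_full F0 a).2 = Rabs (F_strip F0 (folded a)).2.
Proof. by rewrite /F_full; case: (xorb _ _) => /=; rewrite ?Rabs_Ropp. Qed.

Lemma F_full_above a : 1 < Rabs a.2 ->
  exists w : pt n, pnorm w = 1 /\ 0 <= w.2 /\
    (forall i, (F_full F0 a).1 i = exp (Rabs a.2 - 1) * w.1 i) /\
    Rabs (F_full F0 a).2 = exp (Rabs a.2 - 1) * w.2.
Proof.
have [_ [_ [_ [_ [F0_top _]]]]] := F0_adm.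
move=> a_high; have [-> ->] := F_full_abs a; rewrite /F_strip.
case: Rle_dec => /= a_low; first lra.
set w := F0 _.
have [norm_w w_up] : hemisphere w.
  by apply: F0_top; split => /=; [move=> i; exact: fold_coord_bound|].
exists w; do 3 split => //.
by rewrite Rabs_mult (Rabs_pos_eq w.2) // Rabs_pos_eq //; apply: Rlt_le; apply: exp_pos.
Qed.

Lemma F_full_le_exp a :
  (forall i, Rabs ((F_full F0 a).1 i) <= exp (Rabs a.2)) /\
  Rabs (F_full F0 a).2 <= exp (Rabs a.2).
Proof.
have [F0_ball _] := F0_adm.
case: (Rle_lt_dec (Rabs a.2) 1) => [a_low | a_high].
- have exp_ge1 : 1 <= exp (Rabs a.2).
    by have := exp_ineq1_le (Rabs a.2); have := Rabs_pos a.2; lra.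
  have [norm_le1 _] : half_ball (F0 (folded a)).
    apply: F0_ball; split => /=; first by move=> i; exact: fold_coord_bound.
    by split; [exact: Rabs_pos|].
  have [-> ->] := F_full_abs a; rewrite /F_strip; case: Rle_dec => /= [_ | /(_ a_low) []].
  split => [i|].
  + by have := abs_horizontal_le_pnorm (F0 (folded a)) i; lra.
  + by have := abs_vertical_le_pnorm (F0 (folded a)); lra.
- have [w [w_unit [_ [fa_h fa_v]]]] := F_full_above a a_high.
  have exp_le : exp (Rabs a.2 - 1) <= exp (Rabs a.2).
    by apply: Rlt_le; apply: exp_increasing; lra.
  have exp_ge0 := Rlt_le _ _ (exp_pos (Rabs a.2 - 1)).
  have := abs_vertical_le_pnorm w; have := abs_horizontal_le_pnorm w; rewrite w_unit.
  move=> w_h w_v; split => [i|].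
  + rewrite fa_h Rabs_mult Rabs_pos_eq //.
    by have := Rmult_le_compat_l _ _ _ exp_ge0 (w_h i); lra.
  + rewrite fa_v.
    by have := Rmult_le_compat_l _ _ _ exp_ge0 (Rle_trans _ _ _ (Rle_abs _) w_v); lra.
Qed.

End Unfolding.

(* Each term of the margin M pays for one estimate below: 14 gives
   exp M >= 15; 100 n K^2, with K = 1 + 2 / lam, keeps the horizontal part of
   the unit vector w below 1/10; 80 / lam lets lam exp(M - 1) / 20 exceed M. *)
Definition escape_margin (n : nat) (lam : R) : R :=
  14 + 100 * INR n * (1 + 2 / lam) ^ 2 + 80 / lam.

Lemma escape_margin_bounds (n : nat) {lam : R} : 0 < lam ->
  14 <= escape_margin n lam /\
  100 * INR n * (1 + 2 / lam) ^ 2 <= escape_margin n lam /\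
  80 / lam <= escape_margin n lam.
Proof.
move=> lam_gt0; rewrite /escape_margin.
have : 0 < / lam by apply: Rinv_0_lt_compat.
have : 0 <= 100 * INR n * (1 + 2 / lam) ^ 2.
  by apply: Rmult_le_pos; [have := pos_INR n; lra | exact: pow2_ge_0].
rewrite /Rdiv; lra.
Qed.

Section Escape.
Context {n : nat} {F0 : pt n -> pt n} {lam : R}.
Context (F0_adm : admissible_F0 F0) (lam_gt0 : 0 < lam).

Lemma escape_nearly_vertical {r : Zpt n} {a b : pt n} :
  T_cell r (f_map F0 lam a) -> T_cell r (f_map F0 lam b) ->
  Rabs b.2 + escape_margin n lam < Rabs a.2 ->
  99 / 100 * (lam * exp (Rabs a.2 - 1)) <= Rabs (f_map F0 lam a).2.
Proof.
move=> [cell_a _] [cell_b _].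
have [M_ge14 [M_geK _]] := escape_margin_bounds n lam_gt0.
set M := escape_margin n lam in M_ge14 M_geK *.
set K := 1 + 2 / lam in M_geK.
set A := Rabs a.2; set B := Rabs b.2 => far.
have K_ge1 : 1 <= K by have := Rdiv_lt_0_compat 2 lam ltac:(lra) lam_gt0; rewrite /K; lra.
have B_ge0 : 0 <= B by exact: Rabs_pos.
have [w [w_unit [w_up [fa_h fa_v]]]] := F_full_above F0_adm a (ltac:(lra) : 1 < A).
set E := exp (A - 1) in fa_h fa_v.
have E_gt0 : 0 < E by exact: exp_pos.
have E_ge : exp B * M <= E.
  have -> : E = exp B * exp (A - 1 - B) by rewrite -exp_plus /E; f_equal; ring.
  apply: Rmult_le_compat_l; first exact: Rlt_le (exp_pos B).
  by have := exp_ineq1_le (A - 1 - B); lra.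
have w_small : forall j, Rabs (w.1 j) <= K / M.
  move=> j; have := abs_le_of_close (cell_a j) (cell_b j).
  rewrite /f_map /pscale /= fa_h !Rabs_mult (Rabs_pos_eq lam) ?(Rabs_pos_eq E); try lra.
  have := (F_full_le_exp F0_adm b).1 j; rewrite -/B => fb_le fa_close.
  have eB_gt0 := exp_pos B; have eB_ge1 := exp_ineq1_le B.
  have scaled : Rabs (w.1 j) * M <= K.
    apply: (Rmult_le_reg_l (lam * exp B)); first exact: Rmult_lt_0_compat.
    have : lam * (exp B * M * Rabs (w.1 j)) <= lam * (E * Rabs (w.1 j)).
      by apply: Rmult_le_compat_l; [lra | apply: Rmult_le_compat_r; [exact: Rabs_pos|]].
    have : lam * Rabs ((F_full F0 b).1 j) <= lam * exp B by apply: Rmult_le_compat_l; lra.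
    have : lam * exp B * K = lam * exp B + 2 * exp B by rewrite /K; field; lra.
    lra.
  apply: (Rmult_le_reg_r M); first lra.
  by rewrite /Rdiv Rmult_assoc Rinv_l; lra.
have w_vert : 99 / 100 <= w.2.
  have horizontal_tiny : INR n * (K / M) ^ 2 <= / 100.
    apply: (Rmult_le_reg_r (M ^ 2)); first nra.
    have -> : INR n * (K / M) ^ 2 * M ^ 2 = INR n * K ^ 2 by field; lra.
    nra.
  have := unit_vertical_sqr_ge w_unit w_small; nra.
rewrite /f_map /pscale /= Rabs_mult (Rabs_pos_eq lam) ?fa_v; last lra.
rewrite -/E -Rmult_assoc (Rmult_comm (99 / 100)) Rmult_assoc (Rmult_comm _ E).
by apply: Rmult_le_compat_l; [lra | apply: Rmult_le_compat_l; lra].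
Qed.

Lemma escape_step {r : Zpt n} {a b : pt n} :
  T_cell r (f_map F0 lam a) -> T_cell r (f_map F0 lam b) ->
  Rabs b.2 + escape_margin n lam < Rabs a.2 ->
  lam / 3 * exp (Rabs a.2) + escape_margin n lam < Rabs (f_map F0 lam a).2 /\
  5 * Rabs (f_map F0 lam b).2 <= lam / 3 * exp (Rabs a.2).
Proof.
move=> cell_a cell_b far.
have fa_ge := escape_nearly_vertical cell_a cell_b far.
have [M_ge14 [_ M_ge_inv]] := escape_margin_bounds n lam_gt0.
set M := escape_margin n lam in far fa_ge M_ge14 M_ge_inv *.
set A := Rabs a.2 in far fa_ge *; set B := Rabs b.2 in far.
have B_ge0 : 0 <= B by exact: Rabs_pos.
split.
- have E_gt : exp (M - 1) < exp (A - 1) by apply: exp_increasing; lra.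
  have exp_A : exp A = exp 1 * exp (A - 1) by rewrite -exp_plus; f_equal; ring.
  have third_le : lam / 3 * exp A <= 94 / 100 * (lam * exp (A - 1)).
    have lamE_gt0 : 0 < lam * exp (A - 1) by apply: Rmult_lt_0_compat; [|exact: exp_pos].
    have := Rmult_le_compat_l _ _ _ (Rlt_le _ _ lamE_gt0) exp_1_le.
    rewrite exp_A; lra.
  have margin_lt : M < lam * exp (A - 1) / 20.
    have lamM_ge : 80 <= lam * M.
      have -> : 80 = lam * (80 / lam) by field; lra.
      by apply: Rmult_le_compat_l; lra.
    have := Rmult_lt_compat_l _ _ _ lam_gt0 E_gt.
    have := Rmult_le_compat_l _ _ _ (Rlt_le _ _ lam_gt0) (exp_pred_ge_sqr M ltac:(lra)).
    have : 80 * M <= lam * M * M by apply: Rmult_le_compat_r; lra.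
    lra.
  lra.
- have exp_A_ge : 15 * exp B <= exp A.
    have -> : exp A = exp B * exp (A - B) by rewrite -exp_plus; f_equal; ring.
    by have := exp_ineq1_le (A - B); have := exp_pos B; nra.
  have := (F_full_le_exp F0_adm b).2; rewrite -/B => fb_le.
  rewrite /f_map /pscale /= Rabs_mult (Rabs_pos_eq lam); last lra.
  have : lam * Rabs (F_full F0 b).2 <= lam * exp B by apply: Rmult_le_compat_l; lra.
  have : lam * (15 * exp B) <= lam * exp A by apply: Rmult_le_compat_l; lra.
  lra.
Qed.

End Escape.

Theorem lemma1 (n : nat) (F0 : pt n -> pt n) (lam : R)
  (s : nat -> Zpt n) (x y : pt n) :
  (1 <= n)%nat ->
  admissible_F0 F0 ->
  0 < lam ->
  Rbar_lt (Coquelicot.Rbar.Finite (/ lam)) (ess_inf_ell (F_full F0)) ->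
  S_bar (f_map F0 lam) s ->
  H_set (f_map F0 lam) s x ->
  H_set (f_map F0 lam) s y ->
  exists M, 0 < M /\
    forall k : nat,
      Rabs (Nat.iter k (f_map F0 lam) y).2 > Rabs (Nat.iter k (f_map F0 lam) x).2 + M ->
      Rabs (Nat.iter (S k) (f_map F0 lam) y).2
        > lam / 3 * exp (Rabs (Nat.iter k (f_map F0 lam) y).2) + M /\
      lam / 3 * exp (Rabs (Nat.iter k (f_map F0 lam) y).2) + M
        >= 5 * Rabs (Nat.iter (S k) (f_map F0 lam) x).2 + M.
Proof.
(* The margin depends only on n and lam. *)
move=> _ F0_adm lam_gt0 _ _ x_orbit y_orbit.
exists (escape_margin n lam); split.
  by have [M_ge14 _] := escape_margin_bounds n lam_gt0; lra.
move=> k far.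
have [y_next x_next] := escape_step F0_adm lam_gt0
  (a := Nat.iter k (f_map F0 lam) y) (b := Nat.iter k (f_map F0 lam) x)
  (y_orbit k.+1) (x_orbit k.+1) far.
have iterS z : Nat.iter k.+1 (f_map F0 lam) z = f_map F0 lam (Nat.iter k (f_map F0 lam) z) by [].
by rewrite !iterS; split; lra.
Qed.
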